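(* Let $G$ be a network as described in the context and consider (BBMG) on $G$ with coefficients $a_i>0$, $b_i\in\mathbb{R}\setminus\{0\}$, $d_i\in\mathbb{R}$. If there exists a non-constant travelling wave solution $u$ of (BBMG) with all speeds $c_i>0$, then no ramification vertex of $G$ is a sink or a source.
   Context: A network $G$ is obtained from a non-empty, simple, connected, at most countable, locally finite graph by realizing each edge $\mathsf{e}_j$ ($j\in\mathbf{E}\subset\mathbb{N}$) as the image of a $\mathcal{C}^2$ Jordan curve $\pi_j:[0,\ell_j]\to\mathbb{R}^m$ with arc-length parameter $x_j\in[0,\ell_j]$; two distinct edges meet at most in one common vertex. For a vertex $\mathsf{v}$, $N(\mathsf{v})$ is the set of indices of edges incident to $\mathsf{v}$; $V_r$ is the set of vertices of degree $\ge2$ (ramification vertices). Incidence numbers: $\iota_{ij}=1$ if $\pi_j(\ell_j)=\mathsf{v}_i$ (edge incoming at $\mathsf{v}_i$), $\iota_{ij}=-1$ if $\pi_j(0)=\mathsf{v}_i$ (edge outgoing at $\mathsf{v}_i$), $\iota_{ij}=0$ otherwise. A vertex is a sink if all its incident edges are incoming, a source if all are outgoing. For $u$ on $G$, $u_j(x_j,t)=u(\pi_j(x_j),t)$, $\partial_j=\partial/\partial x_j$, and $u_j(t,\mathsf{v}_i)$, $\partial_ju_j(t,\mathsf{v}_i)$ are values at $x_j=\pi_j^{-1}(\mathsf{v}_i)$. (BBMG): $\partial_t u_i - a_i\partial_i^2\partial_t u_i + b_i u_i\partial_i u_i + d_i\partial_i u_i=0$ on each $\mathsf{e}_i$, $t>0$;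 for each $\mathsf{v}_p\in V_r$ and $t\ge0$: $u_j(t,\mathsf{v}_p)=u_k(t,\mathsf{v}_p)$ for $j,k\in N(\mathsf{v}_p)$, and $\sum_j\iota_{pj}a_j\partial_ju_j(t,\mathsf{v}_p)=0$. No initial or boundary-vertex conditions. A strong solution is a function $u$ continuous on $G$ with $u_i\in\mathcal{C}^{1,1}(\mathsf{e}_i\times[0,\infty))$, $\partial_tu_i\in\mathcal{C}^{2,0}(\mathsf{e}_i\times[0,\infty))$, satisfying (BBMG) pointwise. A travelling wave is a strong solution with speeds $c_i\ge0$ and $\varphi_i\in\mathcal{C}^3(\mathbb{R})$ such that $u_i(x_i,t)=\varphi_i(x_i-c_it)$ for all $x_i\in\mathsf{e}_i$, $t\ge0$. *)

From Stdlib Require Import Reals List Classical ClassicalEpsilon.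
From Coquelicot Require Import Coquelicot.
Open Scope R_scope.

Definition xm (P : Prop) : {P} + {~ P} :=
  match excluded_middle_informative P with
  | left p => left p | right q => right q end.

(** * Networks (abstracted to their metric-graph data)
    Edges are indexed by natural numbers j with [isE j] (E ⊂ ℕ);
    edge j is parametrized by arc length x_j ∈ [0, len j],
    with initial vertex [tl j] = π_j(0) and terminal vertex [hd j] = π_j(ℓ_j). *)

Definition incident {V : Type} (isE : nat -> Prop) (tl hd : nat -> V) (v : V) (j : nat) : Prop :=
  isE j /\ (tl j = v \/ hd j = v).

Definition adjacent {V : Type} (isE : nat -> Prop) (tl hd : nat -> V) (v w : V) : Prop :=
  exists j, isE j /\ ((tl j = v /\ hd j = w) \/ (hd j = v /\ tl j = w)).

Inductive reach {V : Type} (isE : nat -> Prop) (tl hd : nat -> V) (v : V) : V -> Prop :=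
  | reach_refl : reach isE tl hd v v
  | reach_step : forall w w', reach isE tl hd v w -> adjacent isE tl hd w w' ->
                 reach isE tl hd v w'.

Record Network (V : Type) := {
  isE : nat -> Prop;
  tl : nat -> V;
  hd : nat -> V;
  len : nat -> R;
  len_pos : forall j, isE j -> 0 < len j;
  (* Jordan curves: the two endpoints of an edge are distinct *)
  no_loop : forall j, isE j -> tl j <> hd j;
  simple : forall j k, isE j -> isE k -> j <> k ->
     ~ ((tl j = tl k /\ hd j = hd k) \/ (tl j = hd k /\ hd j = tl k));
  nonempty : inhabited V;
  countable : exists f : V -> nat, forall v w, f v = f w -> v = w;
  connected : forall v w, reach isE tl hd v w;
  loc_finite : forall v, exists L : list nat, forall j, In j L <-> incident isE tl hd v j
}.

Arguments isE {V}. Arguments tl {V}. Arguments hd {V}. Arguments len {V}.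

Section Net.
Context {V : Type} (G : Network V).

Definition N (v : V) (j : nat) : Prop := incident (isE G) (tl G) (hd G) v j.

Definition ramification (v : V) : Prop :=
  exists j k, j <> k /\ N v j /\ N v k.

Definition sink (v : V) : Prop := forall j, N v j -> hd G j = v.
Definition source (v : V) : Prop := forall j, N v j -> tl G j = v.

Definition iota (v : V) (j : nat) : R :=
  if xm (hd G j = v) then 1 else if xm (tl G j = v) then -1 else 0.

(** arc-length coordinate of vertex v on edge j, i.e. π_j^{-1}(v) *)
Definition vpos (v : V) (j : nat) : R :=
  if xm (hd G j = v) then len G j else 0.

End Net.

Definition dx (u : R -> R -> R) : R -> R -> R := fun x t => Derive (fun y => u y t) x.
Definition dt (u : R -> R -> R) : R -> R -> R := fun x t => Derive (fun s => u x s) t.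

Fixpoint sumR (L : list nat) (f : nat -> R) : R :=
  match L with nil => 0 | j :: L' => f j + sumR L' f end.

Definition strong_solution {V : Type} (G : Network V) (a b d : nat -> R)
    (u : nat -> R -> R -> R) : Prop :=
  (forall i x t, isE G i -> 0 <= x <= len G i -> 0 < t ->
     dt (u i) x t - a i * dx (dx (dt (u i))) x t
       + b i * u i x t * dx (u i) x t + d i * dx (u i) x t = 0) /\
  (forall v, ramification G v -> forall j k t, N G v j -> N G v k -> 0 <= t ->
     u j (vpos G v j) t = u k (vpos G v k) t) /\
  (forall v, ramification G v -> forall (L : list nat), NoDup L ->
     (forall j, In j L <-> N G v j) -> forall t, 0 <= t ->
     sumR L (fun j => iota G v j * a j * dx (u j) (vpos G v j) t) = 0).

Definition C3 (f : R -> R) : Prop :=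
  (forall x, ex_derive_n f 1 x /\ ex_derive_n f 2 x /\ ex_derive_n f 3 x) /\
  (forall x, continuous (Derive_n f 3) x).

Definition tw (phi : nat -> R -> R) (c : nat -> R) : nat -> R -> R -> R :=
  fun i x t => phi i (x - c i * t).

Definition travelling_wave {V : Type} (G : Network V) (a b d : nat -> R)
    (phi : nat -> R -> R) (c : nat -> R) : Prop :=
  (forall i, isE G i -> 0 <= c i /\ C3 (phi i)) /\
  strong_solution G a b d (tw phi c).

Definition constant_on_G {V : Type} (G : Network V) (u : nat -> R -> R -> R) : Prop :=
  exists C, forall i x t, isE G i -> 0 <= x <= len G i -> 0 <= t -> u i x t = C.

(** On an edge with speed [c > 0] every point [(x, t)] with [x = l] and [t > 0] sees the
    profile at [s = l - c t], so the equation reduces to the third-order linear ODE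
    [a c φ''' + (b φ + d - c) φ' = 0] on the whole half-line [s < l]; an energy estimate
    shows that a profile which is constant on [(-∞, p]] stays constant up to [l].
    At a sink or a source all incidence numbers have the same sign, and differentiating the
    continuity condition in [t] gives [c_j φ_j' = c_k φ_k'] at the vertex, so the Kirchhoff
    condition reads [φ_k' · Σ_j a_j c_k / c_j = 0]; hence one profile is constant.
    Continuity at the vertices and connectedness then make every profile constant, so the
    wave is constant. *)
From Stdlib Require Import Reals Lra.
From Stdlib Require List.
From Coquelicot Require Import Coquelicot.
Open Scope R_scope.

Definition flat_upto (f : R -> R) (l C : R) : Prop := forall s, s <= l -> f s = C.

Lemma flat_of_Derive_zero (f : R -> R) l :
  (forall x, ex_derive f x) -> (forall x, x < l -> Derive f x = 0) -> flat_upto f l (f l).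
Proof.
  intros Hf H0 s Hs. destruct (Req_dec s l) as [->|Hsl]; [reflexivity|].
  destruct (MVT_cor2 f (Derive f) s l) as [e [He Hes]]; [lra| |].
  - intros e _. apply is_derive_Reals, Derive_correct, Hf.
  - rewrite H0 in He by lra. lra.
Qed.

Lemma Derive_zero_left (f : R -> R) l C x : (forall s, s < l -> f s = C) -> x < l -> Derive f x = 0.
Proof.
  intros Hf Hx. rewrite (Derive_ext_loc f (fun _ => C)); [apply Derive_const|].
  assert (Hp : 0 < l - x) by lra. exists (mkposreal _ Hp). intros z Hz.
  apply Rabs_lt_between' in Hz. apply Hf. simpl in Hz. lra.
Qed.

Lemma le_of_Derive_nonpos (F dF : R -> R) x1 x2 :
  (forall x, is_derive F x (dF x)) -> (forall x, x1 <= x <= x2 -> dF x <= 0) ->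
  x1 <= x2 -> F x2 <= F x1.
Proof.
  intros HF Hneg Hx. destruct (Req_dec x1 x2) as [->|Hx12]; [lra|].
  destruct (MVT_cor2 F dF x1 x2) as [e [He Hex]]; [lra| |].
  - intros e _. apply is_derive_Reals, HF.
  - assert (dF e * (x2 - x1) <= 0) by (apply Rmult_le_0_r; [apply Hneg|]; lra). lra.
Qed.

Lemma energy_ineq y u w q Q :
  q ^ 2 <= Q -> 2 * y * u + 2 * u * w + 2 * w * (q * u) <= (3 + Q) * (y ^ 2 + u ^ 2 + w ^ 2).
Proof.
  intros HQ.
  pose proof (pow2_ge_0 (y - u)). pose proof (pow2_ge_0 (u - w)).
  pose proof (pow2_ge_0 (q * w - u)). pose proof (pow2_ge_0 q).
  assert (q ^ 2 * w ^ 2 <= Q * w ^ 2) by (apply Rmult_le_compat_r; nra).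
  assert (0 <= Q * y ^ 2) by (apply Rmult_le_pos; nra).
  assert (0 <= Q * u ^ 2) by (apply Rmult_le_pos; nra).
  nra.
Qed.

(* The energy [E = (f - C)^2 + f'^2 + f''^2] satisfies [E' <= (3 + Q) E], so
   [E e^{-(3+Q)x}] is nonincreasing and stays zero. *)
Lemma linear_ode3_zero_data (f q : R -> R) C Q x1 x2 :
  (forall x, ex_derive f x) -> (forall x, ex_derive (Derive f) x) ->
  (forall x, ex_derive (Derive (Derive f)) x) ->
  (forall x, x1 <= x <= x2 -> Derive (Derive (Derive f)) x = q x * Derive f x) ->
  (forall x, x1 <= x <= x2 -> q x ^ 2 <= Q) ->
  f x1 = C -> Derive f x1 = 0 -> Derive (Derive f) x1 = 0 -> x1 <= x2 ->
  f x2 = C /\ Derive f x2 = 0.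
Proof.
  intros H1 H2 H3 Hode HQ Hf0 Hd0 Hdd0 Hx.
  set (K := 3 + Q).
  set (E := fun x => (f x - C) ^ 2 + Derive f x ^ 2 + Derive (Derive f) x ^ 2).
  set (F := fun x => E x * exp (- (K * x))).
  set (dF := fun x => (2 * (f x - C) * Derive f x + 2 * Derive f x * Derive (Derive f) x
              + 2 * Derive (Derive f) x * Derive (Derive (Derive f)) x - K * E x) * exp (- (K * x))).
  assert (HdF : forall x, is_derive F x (dF x)).
  { intros x. unfold F, dF, E. auto_derive; [repeat split; auto|].
    change (fun y => f y) with f. change (fun y => Derive f y) with (Derive f).
    change (fun y => Derive (Derive f) y) with (Derive (Derive f)). ring. }
  assert (Hneg : forall x, x1 <= x <= x2 -> dF x <= 0).
  { intros x Hxx. unfold dF. rewrite Hode by exact Hxx.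
    pose proof (energy_ineq (f x - C) (Derive f x) (Derive (Derive f) x) _ _ (HQ x Hxx)).
    pose proof (exp_pos (- (K * x))). apply Rmult_le_0_r; [unfold E, K in *; lra | lra]. }
  assert (HF2 : F x2 <= 0).
  { assert (F x1 = 0) by (unfold F, E; rewrite Hf0, Hd0, Hdd0; ring).
    pose proof (le_of_Derive_nonpos F dF x1 x2 HdF Hneg Hx). lra. }
  assert (HE2 : E x2 <= 0).
  { pose proof (exp_pos (- (K * x2))). unfold F in HF2.
    destruct (Rle_dec (E x2) 0) as [|HE]; [assumption|].
    assert (0 < E x2 * exp (- (K * x2))) by (apply Rmult_lt_0_compat; lra). lra. }
  unfold E in HE2.
  pose proof (pow2_ge_0 (f x2 - C)). pose proof (pow2_ge_0 (Derive f x2)).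
  pose proof (pow2_ge_0 (Derive (Derive f) x2)).
  split; [cut (f x2 - C = 0); [lra|] |]; apply Rsqr_0_uniq; rewrite Rsqr_pow2; lra.
Qed.

Lemma linear_ode3_flat_extend (f q : R -> R) C p l :
  (forall x, ex_derive f x) -> (forall x, ex_derive (Derive f) x) ->
  (forall x, ex_derive (Derive (Derive f)) x) -> (forall x, continuous q x) ->
  (forall x, x < l -> Derive (Derive (Derive f)) x = q x * Derive f x) ->
  flat_upto f p C -> flat_upto f l C.
Proof.
  intros H1 H2 H3 Hq Hode Hp.
  destruct (Rlt_dec l p) as [Hlp|Hpl].
  { intros s Hs. apply Hp. lra. }
  assert (Hd : forall x, x < p -> Derive f x = 0).
  { intros x. apply (Derive_zero_left f p C). intros s Hs. apply Hp. lra. }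
  assert (Hdd : forall x, x < p -> Derive (Derive f) x = 0).
  { intros x. apply (Derive_zero_left _ p 0), Hd. }
  assert (Hd_all : forall x, x < l -> Derive f x = 0).
  { intros x Hx. destruct (Rlt_dec x p) as [|Hxp]; [auto|].
    destruct (continuity_ab_maj (fun y => q y ^ 2) (p - 1) x) as [M [HM _]]; [lra| |].
    { intros y _. apply continuity_pt_filterlim.
      apply (continuous_mult (K := R_AbsRing)); [apply Hq|].
      apply (continuous_mult (K := R_AbsRing)); [apply Hq|apply continuous_const]. }
    apply (linear_ode3_zero_data f q C (q M ^ 2) (p - 1) x); auto; try lra.
    - intros y Hy. apply Hode. lra.
    - apply Hp. lra.
    - apply Hd. lra.
    - apply Hdd. lra. }
  intros s Hs. rewrite (flat_of_Derive_zero f l H1 Hd_all s Hs).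
  rewrite <- (flat_of_Derive_zero f l H1 Hd_all (p - 1)) by lra. apply Hp. lra.
Qed.

Lemma C3_ex_derive (f : R -> R) : C3 f ->
  (forall y, ex_derive f y) /\ (forall y, ex_derive (Derive f) y) /\
  (forall y, ex_derive (Derive (Derive f)) y).
Proof. intros [H _]. repeat split; intros y; apply (H y). Qed.

Lemma Derive_comp_shift (f : R -> R) k x : (forall y, ex_derive f y) ->
  Derive (fun y => f (y - k)) x = Derive f (x - k).
Proof.
  intros Hf. rewrite Derive_comp; [|apply Hf|auto_derive; auto].
  replace (Derive (fun y => y - k) x) with 1 by (symmetry; apply is_derive_unique; auto_derive; auto; ring).
  ring.
Qed.

Lemma Derive_comp_travel (f : R -> R) c x t : (forall y, ex_derive f y) ->
  Derive (fun s => f (x - c * s)) t = - c * Derive f (x - c * t).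
Proof.
  intros Hf. rewrite Derive_comp; [|apply Hf|auto_derive; auto].
  replace (Derive (fun s => x - c * s) t) with (- c) by (symmetry; apply is_derive_unique; auto_derive; auto; ring).
  reflexivity.
Qed.

Lemma tw_dx phi c i x t : (forall y, ex_derive (phi i) y) ->
  dx (tw phi c i) x t = Derive (phi i) (x - c i * t).
Proof. intros H. apply Derive_comp_shift, H. Qed.

Lemma tw_dt phi c i x t : (forall y, ex_derive (phi i) y) ->
  dt (tw phi c i) x t = - c i * Derive (phi i) (x - c i * t).
Proof. intros H. apply Derive_comp_travel, H. Qed.

Lemma tw_dxxt phi c i x t : C3 (phi i) ->
  dx (dx (dt (tw phi c i))) x t = - c i * Derive (Derive (Derive (phi i))) (x - c i * t).
Proof.
  intros H. destruct (C3_ex_derive _ H) as [H1 [H2 H3]].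
  assert (Hxt : forall y, dx (dt (tw phi c i)) y t = - c i * Derive (Derive (phi i)) (y - c i * t)).
  { intros y. unfold dx at 1. rewrite (Derive_ext _ _ _ (fun z => tw_dt phi c i z t H1)).
    rewrite Derive_scal, Derive_comp_shift by exact H2. reflexivity. }
  unfold dx at 1. rewrite (Derive_ext _ _ _ Hxt), Derive_scal, Derive_comp_shift by exact H3.
  reflexivity.
Qed.

Lemma sumR_ext L f g : (forall j, List.In j L -> f j = g j) -> sumR L f = sumR L g.
Proof. induction L as [|j L IH]; simpl; intros H; [reflexivity|]. rewrite H, IH; auto. Qed.

Lemma sumR_mull L f k : sumR L (fun j => k * f j) = k * sumR L f.
Proof. induction L as [|j L IH]; simpl; [ring|]. rewrite IH. ring. Qed.

Lemma sumR_nonneg L f : (forall j, List.In j L -> 0 <= f j) -> 0 <= sumR L f.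
Proof.
  induction L as [|j L IH]; simpl; intros H; [lra|].
  assert (0 <= f j) by auto. assert (0 <= sumR L f) by auto. lra.
Qed.

Lemma sumR_pos L f j0 : List.In j0 L -> (forall j, List.In j L -> 0 < f j) -> 0 < sumR L f.
Proof.
  induction L as [|j L IH]; simpl; intros Hj0 H; [contradiction|].
  assert (0 < f j) by auto.
  assert (0 <= sumR L f) by (apply sumR_nonneg; intros; apply Rlt_le; auto). lra.
Qed.

Section NetworkFacts.
Variables (V : Type) (G : Network V).

Lemma vpos_bounds w k : isE G k -> 0 <= vpos G w k <= len G k.
Proof.
  intros Hk. pose proof (len_pos _ G k Hk). unfold vpos. destruct (xm (hd G k = w)); lra.
Qed.

Lemma incident_list v : exists L, List.NoDup L /\ forall j, List.In j L <-> N G v j.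
Proof.
  destruct (loc_finite _ G v) as [L HL]. exists (List.nodup Nat.eq_dec L).
  split; [apply List.NoDup_nodup|]. intros j. rewrite List.nodup_In. apply HL.
Qed.

Lemma sink_iota v : sink G v -> forall j, N G v j -> iota G v j = 1.
Proof.
  intros Hs j Hj. unfold iota. destruct (xm (hd G j = v)) as [|Hh]; [reflexivity|].
  exfalso. apply Hh, Hs, Hj.
Qed.

Lemma source_iota v : source G v -> forall j, N G v j -> iota G v j = -1.
Proof.
  intros Hs j Hj. pose proof (Hs j Hj) as Ht. destruct Hj as [HjE _]. unfold iota.
  destruct (xm (hd G j = v)) as [Hh|].
  - exfalso. apply (no_loop _ G j HjE). congruence.
  - destruct (xm (tl G j = v)); [reflexivity|contradiction].
Qed.

End NetworkFacts.

Section TravellingWaveProfiles.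
Variables (V : Type) (G : Network V) (a b d c : nat -> R) (phi : nat -> R -> R).
Hypothesis a_pos : forall i, isE G i -> 0 < a i.
Hypothesis c_pos : forall i, isE G i -> 0 < c i.
Hypothesis phi_C3 : forall i, isE G i -> C3 (phi i).
Hypothesis tw_solves : strong_solution G a b d (tw phi c).

Lemma phi_ex_derive i : isE G i -> forall y, ex_derive (phi i) y.
Proof. intros Hi. apply (C3_ex_derive _ (phi_C3 i Hi)). Qed.

Lemma profile_ode i : isE G i -> forall s, s < len G i ->
  Derive (Derive (Derive (phi i))) s =
  - ((b i * phi i s + d i - c i) / (a i * c i)) * Derive (phi i) s.
Proof.
  intros Hi s Hs. pose proof (c_pos i Hi). pose proof (a_pos i Hi). pose proof (len_pos _ G i Hi).
  set (t := (len G i - s) / c i).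
  assert (Ht : 0 < t) by (apply Rdiv_lt_0_compat; lra).
  assert (Hts : len G i - c i * t = s) by (unfold t; field; lra).
  destruct tw_solves as [Heq _].
  specialize (Heq i (len G i) t Hi ltac:(lra) Ht).
  pose proof (phi_ex_derive i Hi) as Hd.
  rewrite (tw_dt _ _ _ _ _ Hd), (tw_dxxt _ _ _ _ _ (phi_C3 i Hi)), (tw_dx _ _ _ _ _ Hd) in Heq.
  unfold tw in Heq. rewrite Hts in Heq.
  assert (Hac : a i * c i <> 0) by (apply Rgt_not_eq, Rmult_lt_0_compat; lra).
  apply (Rmult_eq_reg_l (a i * c i)); [|exact Hac].
  replace (a i * c i * Derive (Derive (Derive (phi i))) s)
    with (- (b i * phi i s + d i - c i) * Derive (phi i) s) by lra.
  field. split; lra.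
Qed.

Lemma profile_flat_extend i p C : isE G i ->
  flat_upto (phi i) p C -> flat_upto (phi i) (len G i) C.
Proof.
  intros Hi. destruct (C3_ex_derive _ (phi_C3 i Hi)) as [H1 [H2 H3]].
  apply (linear_ode3_flat_extend _ (fun s => - ((b i * phi i s + d i - c i) / (a i * c i))));
    [exact H1 | exact H2 | exact H3 | | exact (profile_ode i Hi)].
  intros x. apply (ex_derive_continuous (K := R_AbsRing) (V := R_NormedModule)).
  auto_derive. apply H1.
Qed.

Lemma flat_at_vertex w j k C : N G w j -> N G w k ->
  flat_upto (phi j) (len G j) C -> flat_upto (phi k) (len G k) C.
Proof.
  intros Hj Hk Hflat. destruct (Nat.eq_dec j k) as [<-|Hjk]; [exact Hflat|].
  assert (Hram : ramification G w) by (exists j, k; auto).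
  destruct Hj as [HjE Hjw], Hk as [HkE Hkw].
  apply (profile_flat_extend k (vpos G w k)); [exact HkE|].
  intros s Hs. pose proof (c_pos k HkE). pose proof (c_pos j HjE).
  set (t := (vpos G w k - s) / c k).
  assert (Ht : 0 <= t) by (apply Rmult_le_pos; [lra | left; apply Rinv_0_lt_compat; lra]).
  assert (Hts : vpos G w k - c k * t = s) by (unfold t; field; lra).
  destruct tw_solves as [_ [Hcont _]].
  pose proof (Hcont w Hram k j t (conj HkE Hkw) (conj HjE Hjw) Ht) as Hkj. unfold tw in Hkj.
  rewrite Hts in Hkj. rewrite Hkj. apply Hflat.
  pose proof (vpos_bounds V G w j HjE). assert (0 <= c j * t) by (apply Rmult_le_pos; lra). lra.
Qed.

Lemma flat_everywhere j C : isE G j ->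
  flat_upto (phi j) (len G j) C -> constant_on_G G (tw phi c).
Proof.
  intros HjE Hflat. exists C.
  assert (Hreach : forall w, reach (isE G) (tl G) (hd G) (tl G j) w ->
            forall k, N G w k -> flat_upto (phi k) (len G k) C).
  { intros w Hr. induction Hr as [|w w' _ IH [e [HeE Hew]]].
    - intros k Hk. apply (flat_at_vertex (tl G j) j); auto. split; auto.
    - assert (He : N G w e /\ N G w' e) by (split; split; auto; destruct Hew as [[? ?]|[? ?]]; auto).
      intros k Hk. apply (flat_at_vertex w' e); [apply He | exact Hk | apply IH, He]. }
  intros i x t Hi Hx Ht. unfold tw.
  apply (Hreach (tl G i)); [apply connected | split; auto |].
  pose proof (c_pos i Hi). assert (0 <= c i * t) by (apply Rmult_le_pos; lra). lra.
Qed.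

Lemma vertex_Derive_relation v j k t : ramification G v -> N G v j -> N G v k -> 0 < t ->
  c j * Derive (phi j) (vpos G v j - c j * t) = c k * Derive (phi k) (vpos G v k - c k * t).
Proof.
  intros Hram Hj Hk Ht.
  assert (HD : Derive (fun r => phi j (vpos G v j - c j * r)) t =
               Derive (fun r => phi k (vpos G v k - c k * r)) t).
  { apply Derive_ext_loc. exists (mkposreal _ Ht). intros r Hr.
    apply Rabs_lt_between' in Hr. simpl in Hr.
    destruct tw_solves as [_ [Hcont _]]. apply (Hcont v Hram j k r Hj Hk). lra. }
  rewrite (Derive_comp_travel _ _ _ _ (phi_ex_derive j (proj1 Hj))),
    (Derive_comp_travel _ _ _ _ (phi_ex_derive k (proj1 Hk))) in HD.
  lra.
Qed.

Lemma uniform_sign_vertex_flat v sg : ramification G v -> sg <> 0 ->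
  (forall j, N G v j -> iota G v j = sg) ->
  exists j C, isE G j /\ flat_upto (phi j) (len G j) C.
Proof.
  intros Hram Hsg Hio. pose proof Hram as [j0 [_ [_ [Hj0 _]]]].
  pose proof (c_pos j0 (proj1 Hj0)) as Hc0.
  set (p0 := vpos G v j0).
  assert (Hflux : forall s, s < p0 -> Derive (phi j0) s = 0).
  { intros s Hs. set (t := (p0 - s) / c j0).
    assert (Ht : 0 < t) by (apply Rdiv_lt_0_compat; lra).
    assert (Hts : p0 - c j0 * t = s) by (unfold t; field; lra).
    destruct (incident_list V G v) as [L [HLnd HL]].
    destruct tw_solves as [_ [_ Hkir]].
    pose proof (Hkir v Hram L HLnd HL t (Rlt_le _ _ Ht)) as HK.
    rewrite (sumR_ext L _ (fun j => (sg * Derive (phi j0) s) * (a j * c j0 / c j))) in HK.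
    2:{ intros j Hj. apply HL in Hj. pose proof (c_pos j (proj1 Hj)).
        pose proof (vertex_Derive_relation v j j0 t Hram Hj Hj0 Ht) as Hrel.
        fold p0 in Hrel. rewrite Hts in Hrel.
        rewrite Hio, (tw_dx _ _ _ _ _ (phi_ex_derive j (proj1 Hj))) by exact Hj.
        replace (Derive (phi j) (vpos G v j - c j * t)) with (c j0 * Derive (phi j0) s / c j)
          by (field_simplify_eq; lra).
        field. lra. }
    rewrite sumR_mull in HK.
    assert (Hsum : 0 < sumR L (fun j => a j * c j0 / c j)).
    { apply (sumR_pos L _ j0); [apply HL, Hj0|].
      intros j Hj. apply HL in Hj. pose proof (a_pos j (proj1 Hj)). pose proof (c_pos j (proj1 Hj)).
      apply Rdiv_lt_0_compat; [apply Rmult_lt_0_compat|]; lra. }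
    apply Rmult_integral in HK as [HK|HK]; [|lra].
    apply Rmult_integral in HK as [HK|HK]; [contradiction|exact HK]. }
  exists j0, (phi j0 p0). split; [apply Hj0|].
  apply (profile_flat_extend j0 p0); [apply Hj0|].
  apply flat_of_Derive_zero; [apply phi_ex_derive, Hj0 | exact Hflux].
Qed.

End TravellingWaveProfiles.

Theorem lemma3p6 (V : Type) (G : Network V) (a b d c : nat -> R) (phi : nat -> R -> R) :
  (forall i, isE G i -> 0 < a i) ->
  (forall i, isE G i -> b i <> 0) ->
  travelling_wave G a b d phi c ->
  ~ constant_on_G G (tw phi c) ->
  (forall i, isE G i -> 0 < c i) ->
  forall v : V, ramification G v -> ~ sink G v /\ ~ source G v.
Proof.
  intros Ha _ [Hshape Hsol] Hnc Hc v Hram.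
  assert (HC3 : forall i, isE G i -> C3 (phi i)) by (intros i Hi; apply Hshape, Hi).
  assert (Hsign : forall sg, sg <> 0 -> ~ (forall j, N G v j -> iota G v j = sg)).
  { intros sg Hsg Hio.
    destruct (uniform_sign_vertex_flat _ G a b d c phi Ha Hc HC3 Hsol v sg Hram Hsg Hio)
      as [j [C [Hj HjC]]].
    exact (Hnc (flat_everywhere _ G a b d c phi Ha Hc HC3 Hsol j C Hj HjC)). }
  split; intros Hv.
  - apply (Hsign 1); [lra | apply sink_iota, Hv].
  - apply (Hsign (-1)); [lra | apply source_iota, Hv].
Qed.
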